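(* Let $X$ and $Y$ be real random variables with probability densities $p_X$ and $p_Y$ (with respect to Lebesgue measure on $\mathbb{R}$), and suppose there is a constant $D<\infty$ with $0<p_Y(y)\le D$ for all $y\in\mathbb{R}$. Then for every $A>0$ (writing $\mathcal{A}=[-A,A]$) and every $s>1$, \[ \begin{aligned} \mathrm{KL}(X\|Y)\le\;& (1+|\ln D|)\big[\mathbb{P}(|Y|\ge A)+\|p_X-p_Y\|_1\big]\\ &+\big(\mathbb{E}_X|\ln p_Y(X)|^s\big)^{1/s}\big[\mathbb{P}(|Y|\ge A)+\|p_X-p_Y\|_1\big]^{1-1/s}\\ &+\Big(1+\max_{y\in\mathcal{A}}p_Y(y)^{-1}\Big)\|p_X-p_Y\|_2^2 . \end{aligned} \]
   Context: $\mathrm{KL}(X\|Y)=\int_{\mathbb{R}} p_X(x)\ln\frac{p_X(x)}{p_Y(x)}\,dx$ is the Kullback–Leibler divergence between the laws of $X$ and $Y$. $\|f\|_q$ denotes the $L^q(\mathbb{R})$ norm with respect to Lebesgue measure. $\mathbb{E}_X|\ln p_Y(X)|^s=\int p_X(x)|\ln p_Y(x)|^s\,dx$. *)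

From HB Require Import structures.
From mathcomp Require Import all_boot all_order all_algebra.
From mathcomp Require Import all_classical all_reals all_analysis.
Set Implicit Arguments. Unset Strict Implicit. Unset Printing Implicit Defensive.
Import Order.TTheory GRing.Theory Num.Theory.
Local Open Scope classical_set_scope.
Local Open Scope ring_scope.

Section Defs.
Variable R : realType.
Local Notation mu := (@lebesgue_measure R).

Definition is_density (p : R -> R) : Prop :=
  measurable_fun setT p /\ (forall x, 0 <= p x) /\
  (\int[mu]_x (p x)%:E = 1)%E.

Definition KL (pX pY : R -> R) : \bar R :=
  (\int[mu]_x (if pX x == 0 then 0 else pX x * ln (pX x / pY x))%:E)%E.

Definition L1norm (f : R -> R) : \bar R := (\int[mu]_x (`|f x|)%:E)%E.
Definition L2norm_sq (f : R -> R) : \bar R := (\int[mu]_x (`|f x| ^+ 2)%:E)%E.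

Definition E_abs_ln_pow (pX pY : R -> R) (s : R) : \bar R :=
  (\int[mu]_x (pX x * (`|ln (pY x)| `^ s))%:E)%E.

Definition prob_abs_ge (pY : R -> R) (A : R) : \bar R :=
  (\int[mu]_(x in [set x : R | (A <= `|x|)%R]) (pY x)%:E)%E.

(* max_{y in [-A,A]} p_Y(y)^{-1}, read as a supremum *)
Definition sup_inv_on (pY : R -> R) (A : R) : \bar R :=
  ereal_sup [set ((pY y)^-1)%:E | y in `[- A, A]].
End Defs.

From HB Require Import structures.
From mathcomp Require Import all_boot all_order all_algebra.
From mathcomp Require Import all_classical all_reals all_analysis.
From mathcomp Require Import ring lra measurable_realfun.
Import Order.TTheory GRing.Theory Num.Theory.
Local Open Scope classical_set_scope.
Local Open Scope ring_scope.

(* Write f = p_X, g = p_Y, I = [-A, A], and bound f ln (f/g) pointwise.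
   On I, ln t <= t - 1 gives f ln (f/g) <= (f - g) + (f - g)^2 / g, whose last
   term integrates to at most max_I (1/g) * ||f - g||_2^2.
   Off I, f ln (f/g) = f ln f - f ln g.  The entropy part f ln f is at most
   (1 + |ln D|) f when f <= 2D, and at most f + f^2/4 <= f + (f - g)^2
   otherwise, because then f - g >= f/2.  The cross term f |ln g| is handled by
   Hoelder with exponents s and s/(s-1): its integral off I is at most
   (E_X |ln g(X)|^s)^(1/s) times the (1 - 1/s)-th power of the mass of f off I,
   and that mass is at most P(|Y| >= A) + ||f - g||_1. *)

Section ln_inequalities.
Context {R : realType}.
Implicit Types x f g D : R.

Lemma ln_le_subr1 {x} : 0 < x -> ln x <= x - 1.
Proof.
move=> x0; have := @le_ln1Dx R (x - 1).
by rewrite addrCA subrr addr0; apply; lra.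
Qed.

Lemma ln2_le1 : ln (2 : R) <= 1.
Proof. by have := @ln_le_subr1 2 (ltr0Sn _ 1); lra. Qed.

Lemma ln_le1D_div4 {x} : 0 < x -> ln x <= 1 + x / 4.
Proof.
move=> x0; have x4 : 0 < x / 4 by rewrite divr_gt0.
rewrite -[in ln x](_ : 2 * 2 * (x / 4) = x); last by field.
rewrite lnM ?posrE ?mulr_gt0 // lnM ?posrE //.
by have := ln_le_subr1 x4; have := ln2_le1; lra.
Qed.

Lemma xlnx_div_le_chi2 {f g} : 0 <= f -> 0 < g ->
  f * ln (f / g) <= (f - g) + (f - g) ^+ 2 / g.
Proof.
move=> f0 g0; have [->|fn0] := eqVneq f 0.
  by rewrite !mul0r sub0r sqrrN expr2 mulrK ?unitfE ?gt_eqF // addNr.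
have fg : 0 < f / g by rewrite divr_gt0 // lt0r fn0.
apply: le_trans (ler_wpM2l f0 (ln_le_subr1 fg)) _.
by rewrite le_eqVlt; apply/orP; left; apply/eqP; field; rewrite gt_eqF.
Qed.

Lemma xlnx_le_tail {f g D} : 0 <= f -> 0 < g -> g <= D ->
  f * ln f <= (1 + `|ln D|) * (g + `|f - g|) + (f - g) ^+ 2.
Proof.
move=> f0 g0 gD; set c := 1 + `|ln D|.
have c1 : 1 <= c by rewrite lerDl.
have f_le : f <= g + `|f - g| by have := ler_norm (f - g); lra.
have sq0 := sqr_ge0 (f - g).
have [f_le2D|f_gt2D] := lerP f (2 * D).
  have lnf_le : ln f <= c.
    have [f_le0|fpos] := lerP f 0; first by rewrite ln0 //; lra.
    have D0 : 0 < D by lra.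
    have : ln f <= ln (2 * D) by rewrite ler_ln ?posrE; lra.
    rewrite lnM ?posrE //.
    by rewrite /c; have := ln2_le1; have := ler_norm (ln D); lra.
  have := ler_wpM2l f0 lnf_le; nra.
have fpos : 0 < f by lra.
have := ler_wpM2l f0 (ln_le1D_div4 fpos).
have : f ^+ 2 / 4 <= (f - g) ^+ 2 by rewrite !expr2; nra.
nra.
Qed.

Lemma xlnx_div_le_tail {f g D} : 0 <= f -> 0 < g -> g <= D ->
  f * ln (f / g) <= (1 + `|ln D|) * (g + `|f - g|) + f * `|ln g| + (f - g) ^+ 2.
Proof.
move=> f0 g0 gD.
have -> : f * ln (f / g) = f * ln f - f * ln g.
  have [->|fn0] := eqVneq f 0; first by rewrite !mul0r subrr.
  have fpos : 0 < f by rewrite lt0r fn0.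
  by rewrite lnM ?posrE ?invr_gt0 // lnV ?posrE // mulrBr.
have := ler_wpM2l f0 (ler_norm (- ln g)); rewrite normrN.
have := xlnx_le_tail f0 g0 gD; lra.
Qed.

End ln_inequalities.

Section integral_bounds.
Context {d} {T : measurableType d} {R : realType} (mu : {measure set T -> \bar R}).
Local Open Scope ereal_scope.

Lemma measurable_funV_gt0 {v : T -> R} : measurable_fun setT v ->
  (forall x, 0 < v x)%R -> measurable_fun setT (fun x => (v x)^-1)%R.
Proof.
move=> mv v0; rewrite (_ : (fun x => _) = expR \o (\- (@ln R \o v))%R).
  apply: measurableT_comp (@measurable_expR R) (measurable_funN _).
  exact: measurableT_comp (@measurable_ln R) mv.
by apply/funext => x /=; rewrite expRN lnK // posrE.
Qed.

Lemma measurable_EFin_patch {D : set T} {v : T -> R} : measurable D ->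
  measurable_fun setT v -> measurable_fun setT ((EFin \o v) \_ D).
Proof.
move=> mD mv; apply/(measurable_restrictT _ mD).
exact/measurable_funTS/measurable_EFinP.
Qed.

Lemma patch_EFin_ge0 (D : set T) {u : T -> R} :
  (forall x, 0 <= u x)%R -> forall x, 0 <= ((EFin \o u) \_ D) x.
Proof. by move=> u0 x; apply: erestrict_ge0 => y _; rewrite lee_fin. Qed.

Lemma integral_le_ge0_majorant {k B : T -> \bar R} :
  measurable_fun setT k -> measurable_fun setT B ->
  (forall x, 0 <= B x) -> (forall x, k x <= B x) ->
  \int[mu]_x k x <= \int[mu]_x B x.
Proof.
move=> mk mB B0 kB; rewrite integralE.
apply: (@le_trans _ _ (\int[mu]_x k^\+ x)).
  rewrite -[leRHS]sube0; apply: leeB => //.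
  by apply: integral_ge0 => x _; exact: funeneg_ge0.
apply: ge0_le_integral => //; first exact: measurable_funepos.
by move=> x _; rewrite funeposE ge_max kB B0.
Qed.

Lemma integral_le_integralD_normB {O : set T} {f g : T -> R} :
  measurable O -> measurable_fun setT f -> measurable_fun setT g ->
  (forall x, 0 <= f x)%R -> (forall x, 0 <= g x)%R ->
  \int[mu]_(x in O) (f x)%:E <=
    \int[mu]_(x in O) (g x)%:E + \int[mu]_x (`|f x - g x|)%:E.
Proof.
move=> mO mf mg f0 g0.
have mfg : measurable_fun setT (fun x => `|f x - g x|)%R.
  exact: measurableT_comp (@normr_measurable R setT) (measurable_funB mf mg).
have mgO : measurable_fun O (EFin \o g) by exact/measurable_funTS/measurable_EFinP.
have mfgO : measurable_fun O (EFin \o (fun x => `|f x - g x|)%R).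
  exact/measurable_funTS/measurable_EFinP.
apply: (@le_trans _ _ (\int[mu]_(x in O) ((g x)%:E + (`|f x - g x|)%:E))).
  apply: ge0_le_integral => //.
  - by move=> x _; rewrite lee_fin.
  - exact/measurable_funTS/measurable_EFinP.
  - exact: emeasurable_funD.
  - by move=> x _; rewrite -EFinD lee_fin; have := ler_norm (f x - g x); lra.
rewrite ge0_integralD //; last by move=> x _; rewrite lee_fin.
apply: leeD2l; apply: ge0_subset_integral => //; exact/measurable_EFinP.
Qed.

Lemma integral_mul_le_bound {I : set T} {h w : T -> R} {S : \bar R} :
  measurable I -> measurable_fun setT h -> measurable_fun setT w ->
  (forall x, 0 <= h x)%R -> 0 <= S ->
  (forall x, I x -> 0 <= w x)%R -> (forall x, I x -> (w x)%:E <= S) ->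
  \int[mu]_(x in I) (h x * w x)%:E <= S * \int[mu]_x (h x)%:E.
Proof.
move=> mI mh mw h0 S0 w0 wS.
have mhI : measurable_fun I (EFin \o h) by exact/measurable_funTS/measurable_EFinP.
apply: (@le_trans _ _ (\int[mu]_(x in I) (S * (h x)%:E))).
  apply: ge0_le_integral => //.
  - by move=> x Ix; rewrite lee_fin mulr_ge0 ?w0.
  - exact/measurable_funTS/measurable_EFinP/measurable_funM.
  - exact: measurable_funeM.
  - move=> x Ix; rewrite EFinM [leRHS]muleC.
    by apply: lee_wpmul2l; [rewrite lee_fin | exact: wS].
rewrite ge0_integralZl //; last by move=> x _; rewrite lee_fin.
apply: lee_wpmul2l => //; apply: ge0_subset_integral => //.
- exact/measurable_EFinP.
- by move=> x _; rewrite lee_fin.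
Qed.

Lemma hoelder_weighted_restrict {O : set T} {f h : T -> R} {s : R} :
  measurable O -> measurable_fun setT f -> measurable_fun setT h ->
  (forall x, 0 <= f x)%R -> (forall x, 0 <= h x)%R -> (1 < s)%R ->
  \int[mu]_(x in O) (f x * h x)%:E <=
    poweR (\int[mu]_x (f x * h x `^ s)%:E) s^-1 *
    poweR (\int[mu]_(x in O) (f x)%:E) (1 - s^-1).
Proof.
move=> mO mf mh f0 h0 s1.
have s0 : (0 < s)%R by lra.
set r := (1 - s^-1)%R.
have r0 : (0 < r)%R by rewrite subr_gt0 invf_lt1.
have sr : (s^-1 + r = 1)%R by rewrite addrC subrK.
(* f h 1_O = (f^(1/s) h) (f^(1 - 1/s) 1_O) *)
pose F x := (f x `^ s^-1 * h x)%R.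
pose G x := (f x `^ r * \1_O x)%R.
have mF : measurable_fun setT F.
  by apply: measurable_funM => //; exact: measurableT_comp (measurable_powR _) mf.
have mG : measurable_fun setT G.
  apply: measurable_funM; last exact: measurable_indic.
  exact: measurableT_comp (measurable_powR _) mf.
have q0 : (0 < r^-1)%R by rewrite invr_gt0.
have := hoelder mu mF mG s0 q0; rewrite invrK => /(_ sr).
have -> : 'N[mu]_1[EFin \o (F \* G)%R] = \int[mu]_(x in O) (f x * h x)%:E.
  rewrite Lnorm1 [RHS]integral_mkcond; apply: eq_integral => x _.
  rewrite patchE /= /F /G indicE; case: ifPn => xO /=; last by rewrite !mulr0 normr0.
  rewrite mulr1 mulrAC -powRD; last by rewrite sr oner_eq0.
  by rewrite sr powRr1 // ger0_norm // mulr_ge0.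
have -> : 'N[mu]_s%:E[EFin \o F] = poweR (\int[mu]_x (f x * h x `^ s)%:E) s^-1.
  rewrite unlock; congr poweR; apply: eq_integral => x _.
  rewrite /= /F ger0_norm ?mulr_ge0 ?powR_ge0 //.
  by rewrite powRM ?powR_ge0 // -powRrM mulVf ?gt_eqF // powRr1.
have -> : 'N[mu]_(r^-1)%:E[EFin \o G] = poweR (\int[mu]_(x in O) (f x)%:E) r.
  rewrite unlock invrK; congr poweR; rewrite [RHS]integral_mkcond.
  apply: eq_integral => x _; rewrite patchE /= /G indicE.
  case: ifPn => xO /=; last by rewrite mulr0 normr0 powR0 // invr_neq0 ?gt_eqF.
  by rewrite mulr1 ger0_norm ?powR_ge0 // -powRrM mulfV ?gt_eqF // powRr1.
done.
Qed.

End integral_bounds.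

Section kl_bound.
Context {R : realType}.
Local Notation mu := (@lebesgue_measure R).
Local Open Scope ereal_scope.

Lemma KLE (f g : R -> R) : KL f g = \int[mu]_x (f x * ln (f x / g x))%:E.
Proof. by apply: eq_integral => x _; case: ifPn => // /eqP ->; rewrite mul0r. Qed.

Lemma L2norm_sqE (u : R -> R) : L2norm_sq u = \int[mu]_x (u x ^+ 2)%:E.
Proof. by apply: eq_integral => x _; rewrite real_normK ?num_real. Qed.

Lemma sup_inv_on_ub {g : R -> R} {A y : R} :
  `[(- A)%R, A]%classic y -> ((g y)^-1)%:E <= sup_inv_on g A.
Proof. by move=> Iy; apply: ereal_sup_ubound; exists y. Qed.

Lemma sup_inv_on_ge0 {g : R -> R} {A : R} :
  (0 <= A)%R -> (forall y, 0 < g y)%R -> 0 <= sup_inv_on g A.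
Proof.
move=> A0 g0; have I0 : `[(- A)%R, A]%classic 0%R by rewrite /= in_itv /= oppr_le0 A0.
by apply: le_trans (sup_inv_on_ub I0); rewrite lee_fin invr_ge0 ltW.
Qed.

Lemma integral_notin_itv_le_prob_abs_ge (A : R) {g : R -> R} :
  measurable_fun setT g -> (forall x, 0 <= g x)%R ->
  \int[mu]_(x in ~` `[(- A)%R, A]%classic) (g x)%:E <= prob_abs_ge g A.
Proof.
move=> mg g0; apply: ge0_subset_integral => //.
- by apply: measurableC; exact: measurable_itv.
- rewrite (_ : [set x | _] = Num.norm @^-1` `[A, +oo[); last first.
    by apply/seteqP; split => x /=; rewrite in_itv /= andbT.
  by rewrite -[_ @^-1` _]setTI; exact: normr_measurable.
- exact/measurable_funTS/measurable_EFinP.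
- by move=> x _; rewrite lee_fin.
- by move=> x /= /negP; rewrite in_itv /= -ler_norml -ltNge => /ltW.
Qed.

Section two_densities.
Context {f g : R -> R}.
Hypotheses (mf : measurable_fun setT f) (mg : measurable_fun setT g).
Hypotheses (f0 : forall x, (0 <= f x)%R) (g0 : forall x, (0 < g x)%R).

Let g_ge0 x : (0 <= g x)%R := ltW (g0 x).

Lemma tail_integral_abs_ln_le (A s : R) : (1 < s)%R ->
  \int[mu]_(x in ~` `[(- A)%R, A]%classic) (f x * `|ln (g x)|)%:E <=
    poweR (E_abs_ln_pow f g s) s^-1 *
    poweR (prob_abs_ge g A + L1norm (fun x => f x - g x)%R) (1 - s^-1).
Proof.
move=> s1; have mO : measurable (~` `[(- A)%R, A]%classic).
  by apply: measurableC; exact: measurable_itv.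
have mlng : measurable_fun setT (fun x => `|ln (g x)|)%R.
  apply: measurableT_comp (@normr_measurable R setT) _.
  exact: measurableT_comp (@measurable_ln R) mg.
apply: le_trans (hoelder_weighted_restrict mu mO mf mlng f0 _ s1) _ => //.
apply: lee_wpmul2l; first exact: poweR_ge0.
apply: gt0_ler_poweR; rewrite ?in_itv /= ?leey ?andbT.
- by rewrite subr_ge0 invf_le1; lra.
- by apply: integral_ge0 => x _; rewrite lee_fin.
- by apply: adde_ge0; apply: integral_ge0 => x _; rewrite lee_fin.
apply: le_trans (integral_le_integralD_normB mu mO mf mg f0 g_ge0) _.
by apply: leeD2r; exact: integral_notin_itv_le_prob_abs_ge.
Qed.

Lemma integral_itv_chi2_le (A : R) : (0 <= A)%R ->
  \int[mu]_(x in `[(- A)%R, A]%classic) ((f x - g x) ^+ 2 / g x)%:E <=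
    sup_inv_on g A * L2norm_sq (fun x => f x - g x)%R.
Proof.
move=> A0; have md2 : measurable_fun setT (fun x => (f x - g x) ^+ 2)%R.
  exact/measurable_funX/measurable_funB.
rewrite L2norm_sqE; apply: (integral_mul_le_bound mu (measurable_itv _) md2
  (measurable_funV_gt0 mg g0)) => //.
- by move=> x; rewrite sqr_ge0.
- exact: sup_inv_on_ge0.
- by move=> x _; rewrite invr_ge0.
- by move=> x Ix; exact: sup_inv_on_ub.
Qed.

Context {D : R} {I : set R}.
Hypotheses (gD : forall x, (g x <= D)%R) (mI : measurable I).

Let c := (1 + `|ln D|)%R.
Let d x := (f x - g x)%R.
Let mass_term x := c%:E * (((EFin \o g) \_ (~` I)) x + (`|d x|)%:E).
Let log_term := (EFin \o (fun x => f x * `|ln (g x)|)%R) \_ (~` I).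
Let chi2_term x := (d x ^+ 2)%:E + ((EFin \o (fun x => d x ^+ 2 / g x)%R) \_ I) x.
Let majorant x := mass_term x + log_term x + chi2_term x.

Let c1 : (1 <= c)%R. Proof. by rewrite lerDl. Qed.
Let c0 : (0 <= c)%R. Proof. exact: le_trans c1. Qed.

Let KL_integrand_le_majorant x : (f x * ln (f x / g x))%:E <= majorant x.
Proof.
rewrite /majorant /mass_term /log_term /chi2_term !patchE in_setC.
case: (boolP (x \in I)) => xI /=.
- rewrite add0e adde0 -EFinM -!EFinD lee_fin.
  have := xlnx_div_le_chi2 (f0 x) (g0 x).
  have := ler_wpM2r (normr_ge0 (d x)) c1; rewrite mul1r.
  have := ler_norm (d x); have := sqr_ge0 (d x).
  rewrite /d; lra.
- rewrite adde0 -EFinM -!EFinD lee_fin; exact: xlnx_div_le_tail.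
Qed.

Let mO : measurable (~` I). Proof. exact: measurableC. Qed.
Let md : measurable_fun setT d. Proof. exact: measurable_funB. Qed.
Let mabsd : measurable_fun setT (EFin \o (fun x => `|d x|)%R).
Proof.
by apply/measurable_EFinP; exact: measurableT_comp (@normr_measurable R setT) md.
Qed.
Let msqd : measurable_fun setT (EFin \o (fun x => d x ^+ 2)%R).
Proof. by apply/measurable_EFinP; exact: measurable_funX. Qed.
Let mgO : measurable_fun setT ((EFin \o g) \_ (~` I)).
Proof. exact: measurable_EFin_patch. Qed.
Let mchiI : measurable_fun setT ((EFin \o (fun x => d x ^+ 2 / g x)%R) \_ I).
Proof.
apply: measurable_EFin_patch mI (measurable_funM (measurable_funX 2 md) _).
exact: measurable_funV_gt0 mg g0.
Qed.
Let mmass_term : measurable_fun setT mass_term.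
Proof. exact/measurable_funeM/emeasurable_funD. Qed.
Let mlog_term : measurable_fun setT log_term.
Proof.
apply: measurable_EFin_patch mO (measurable_funM mf _).
apply: measurableT_comp (@normr_measurable R setT) _.
exact: measurableT_comp (@measurable_ln R) mg.
Qed.
Let mchi2_term : measurable_fun setT chi2_term.
Proof. exact: emeasurable_funD. Qed.

Let gO0 := patch_EFin_ge0 (~` I) g_ge0.
Let log_term0 :=
  patch_EFin_ge0 (~` I) (fun x => mulr_ge0 (f0 x) (normr_ge0 (ln (g x)))).
Let chiI0 := patch_EFin_ge0 I (fun x => divr_ge0 (sqr_ge0 (d x)) (g_ge0 x)).
Let absd0 x : 0 <= (`|d x|)%:E. Proof. by rewrite lee_fin. Qed.
Let sqd0 x : 0 <= (d x ^+ 2)%:E. Proof. by rewrite lee_fin sqr_ge0. Qed.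
Let mass_term0 x : 0 <= mass_term x.
Proof. by rewrite mule_ge0 ?lee_fin ?adde_ge0. Qed.
Let chi2_term0 x : 0 <= chi2_term x. Proof. by rewrite adde_ge0. Qed.

Let integral_majorant : \int[mu]_x majorant x =
  c%:E * (\int[mu]_(x in ~` I) (g x)%:E + L1norm d)
    + \int[mu]_(x in ~` I) (f x * `|ln (g x)|)%:E
    + (L2norm_sq d + \int[mu]_(x in I) (d x ^+ 2 / g x)%:E).
Proof.
rewrite (ge0_integralD mu measurableT (fun x _ => adde_ge0 (mass_term0 x) (log_term0 x))
  (emeasurable_funD mmass_term mlog_term) (fun x _ => chi2_term0 x) mchi2_term).
rewrite (ge0_integralD mu measurableT (fun x _ => mass_term0 x) mmass_term
  (fun x _ => log_term0 x) mlog_term).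
rewrite (ge0_integralD mu measurableT (fun x _ => sqd0 x) msqd (fun x _ => chiI0 x) mchiI).
rewrite (ge0_integralZl_EFin mu measurableT (fun x _ => adde_ge0 (gO0 x) (absd0 x))
  (emeasurable_funD mgO mabsd) c0).
rewrite (ge0_integralD mu measurableT (fun x _ => gO0 x) mgO (fun x _ => absd0 x) mabsd).
by rewrite -!integral_mkcond L2norm_sqE.
Qed.

Lemma KL_le_tail_chi2 :
  KL f g <= (1 + `|ln D|)%:E *
      (\int[mu]_(x in ~` I) (g x)%:E + L1norm (fun x => f x - g x)%R)
    + \int[mu]_(x in ~` I) (f x * `|ln (g x)|)%:E
    + (L2norm_sq (fun x => f x - g x)%R
       + \int[mu]_(x in I) ((f x - g x) ^+ 2 / g x)%:E).
Proof.
have mk : measurable_fun setT (fun x => (f x * ln (f x / g x))%:E).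
  apply/measurable_EFinP; apply: measurable_funM mf _.
  apply: measurableT_comp (@measurable_ln R) (measurable_funM mf _).
  exact: measurable_funV_gt0 mg g0.
have majorant0 x : 0 <= majorant x by rewrite !adde_ge0.
rewrite KLE -integral_majorant; apply: (integral_le_ge0_majorant mu mk _ majorant0).
- exact: emeasurable_funD (emeasurable_funD mmass_term mlog_term) mchi2_term.
- exact: KL_integrand_le_majorant.
Qed.

End two_densities.
End kl_bound.

Theorem theorem2p1 (R : realType) (pX pY : R -> R) (D : R)
  (hX : is_density pX) (hY : is_density pY)
  (hpos : forall y, 0 < pY y) (hD : forall y, pY y <= D)
  (A s : R) (hA : 0 < A) (hs : 1 < s) :
  (KL pX pY <=
     (1 + `|ln D|)%:E * (prob_abs_ge pY A + L1norm (fun x => (pX x - pY x)%R))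
   + poweR (E_abs_ln_pow pX pY s) (s^-1)%R
     * poweR (prob_abs_ge pY A + L1norm (fun x => (pX x - pY x)%R)) (1 - s^-1)
   + (1%:E + sup_inv_on pY A) * L2norm_sq (fun x => (pX x - pY x)%R))%E.
Proof.
case: hX => mf [f0 _]; case: hY => mg [g0 _].
have mI : measurable `[- A, A]%classic by exact: measurable_itv.
apply: le_trans (KL_le_tail_chi2 mf mg f0 hpos hD mI) _.
rewrite ge0_muleDl ?mul1e ?(sup_inv_on_ge0 (ltW hA) hpos) //.
apply: leeD; [apply: leeD | apply: leeD2l].
- apply: lee_wpmul2l; first by rewrite lee_fin addr_ge0.
  by apply: leeD2r; exact: integral_notin_itv_le_prob_abs_ge.
- exact: tail_integral_abs_ln_le.
- by apply: integral_itv_chi2_le => //; exact: ltW.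
Qed.
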